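(* For any program $\Omega$ with weight constraints, the nondisjunctive translation $[\Omega]^{nd}$ is strongly equivalent to the translation $[\Omega]$.
   Context: Programs with nested expressions. A literal is a propositional atom $a$ or its classical negation $\neg a$; a set of literals is consistent if it contains no pair $a,\neg a$. Elementary formulas are literals, $\bot$ and $\top$. Formulas are built from elementary formulas using the unary connective $\mathit{not}$ and the binary connectives '','' (conjunction) and '';'' (disjunction). A rule with nested expressions has the form $\mathit{Head}\leftarrow \mathit{Body}$ with formulas $\mathit{Head},\mathit{Body}$; a program with nested expressions is a set of such rules. For a consistent set $Z$ of literals: $Z\models l$ iff $l\in Z$; $Z\models\top$; $Z\not\models\bot$; $Z\models(F,G)$ iff both; $Z\models(F;G)$ iff at least one; $Z\models \mathit{not}\,F$ iff $Z\not\models F$. $Z$ satisfies a program if for every rule, $Z\models\mathit{Body}$ implies $Z\models\mathit{Head}$. The reduct $F^Z$: $F^Z=F$ for elementary $F$; $(F,G)^Z=F^Z,G^Z$; $(F;G)^Z=F^Z;G^Z$; $(\mathit{not}\,F)^Z=\bot$ if $Z\models F$ and $\top$ otherwise; $\Pi^Z$ consists of the rules $\mathit{Head}^Z\leftarrow\mathit{Body}^Z$. $Z$ is an answer set of a program without $\mathit{not}$ if it is a minimal consistent set of literals satisfying it, and of an arbitrary $\Pi$ if it is an answer set of $\Pi^Z$. Programs $\Pi_1,\Pi_2$ are strongly equivalent if for every program $\Pi$ with nested expressions, $\Pi_1\cup\Pi$ and $\Pi_2\cup\Pi$ have the same answer sets. Abbreviation: $\langle F_1,\dots,F_n\rangle:X$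 (for $X$ a set of subsets of $\{1,\dots,n\}$) is the disjunction over $I\in X$ of the conjunctions of $F_i$, $i\in I$ (empty conjunction $\top$, empty disjunction $\bot$). Weight constraints. A rule element is a literal $l$ (positive) or $\mathit{not}\ l$ (negative). A weight constraint is $L\le\{c_1=w_1,\dots,c_m=w_m\}\le U$ with $L,U$ reals or $\pm\infty$, rule elements $c_i$ ($m\ge0$), nonnegative real weights $w_i$. A rule with weight constraints is $C_0\leftarrow C_1,\dots,C_n$ ($n\ge 0$) with weight constraints $C_i$; the rule elements of $C_0$ are its head elements; a program with weight constraints is a set of such rules. Translations. For $S=\{c_1=w_1,\dots,c_m=w_m\}$ and real $w$: $[w\le S]=\langle c_1,\dots,c_m\rangle:\{I\subseteq\{1,\dots,m\}: w\le\sum_{i\in I}w_i\}$, $[w<S]=\langle c_1,\dots,c_m\rangle:\{I: w<\sum_{i\in I}w_i\}$, $[S\le U]=\mathit{not}\,[U<S]$, $[L\le S\le U]=[L\le S],[S\le U]$. $[\Omega]$ replaces each rule $C_0\leftarrow C_1,\dots,C_n$ with $(l_1;\mathit{not}\,l_1),\dots,(l_p;\mathit{not}\,l_p),[C_0]\leftarrow[C_1],\dots,[C_n]$, where $l_1,\dots,l_p$ are the positive head elements of the rule. $[\Omega]^{nd}$ replaces each such rule with the $p+1$ rules $l_j\leftarrow\mathit{not}\,\mathit{not}\,l_j,[C_1],\dots,[C_n]$ ($1\le j\le p$) and $\bot\leftarrow\mathit{not}\,[C_0],[C_1],\dots,[C_n]$. *)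

From Stdlib Require Import Reals List ClassicalDescription.
Import ListNotations.
Open Scope R_scope.

Set Implicit Arguments.

Section Nested.
Variable atom : Type.

(** Literals: an atom [a] or its classical negation [~a]. *)
Inductive lit : Type := LPos (a : atom) | LNeg (a : atom).

Definition litset := lit -> Prop.

Definition consistent (Z : litset) : Prop :=
  forall a, ~ (Z (LPos a) /\ Z (LNeg a)).

Inductive formula : Type :=
| FLit (l : lit)
| FBot
| FTop
| FNot (F : formula)
| FAnd (F G : formula)
| FOr  (F G : formula).

Fixpoint sat (Z : litset) (F : formula) : Prop :=
  match F with
  | FLit l => Z l
  | FBot => False
  | FTop => True
  | FNot G => ~ sat Z G
  | FAnd G H => sat Z G /\ sat Z H
  | FOr G H => sat Z G \/ sat Z H
  end.

Record rule : Type := mkRule { head : formula; body : formula }.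

Definition program := rule -> Prop.

Definition union (P Q : program) : program := fun r => P r \/ Q r.

Definition satisfies (Z : litset) (P : program) : Prop :=
  forall r, P r -> sat Z (body r) -> sat Z (head r).

Fixpoint reduct (Z : litset) (F : formula) : formula :=
  match F with
  | FLit l => FLit l
  | FBot => FBot
  | FTop => FTop
  | FNot G => if excluded_middle_informative (sat Z G) then FBot else FTop
  | FAnd G H => FAnd (reduct Z G) (reduct Z H)
  | FOr G H => FOr (reduct Z G) (reduct Z H)
  end.

Definition reduct_rule (Z : litset) (r : rule) : rule :=
  mkRule (reduct Z (head r)) (reduct Z (body r)).

Definition reduct_prog (Z : litset) (P : program) : program :=
  fun r' => exists r, P r /\ r' = reduct_rule Z r.

Definition subset (Z1 Z2 : litset) : Prop := forall l, Z1 l -> Z2 l.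

Definition minimal_model (P : program) (Z : litset) : Prop :=
  consistent Z /\ satisfies Z P /\
  forall Z', consistent Z' -> satisfies Z' P -> subset Z' Z -> subset Z Z'.

Definition answer_set (P : program) (Z : litset) : Prop :=
  minimal_model (reduct_prog Z P) Z.

Definition strongly_equivalent (P1 P2 : program) : Prop :=
  forall P : program, forall Z : litset,
    answer_set (union P1 P) Z <-> answer_set (union P2 P) Z.

Fixpoint big_and (l : list formula) : formula :=
  match l with
  | [] => FTop
  | [F] => F
  | F :: rest => FAnd F (big_and rest)
  end.

Fixpoint big_or (l : list formula) : formula :=
  match l with
  | [] => FBot
  | [F] => F
  | F :: rest => FOr F (big_or rest)
  end.

Inductive elem : Type := EPos (l : lit) | ENot (l : lit).

Definition elem_formula (c : elem) : formula :=
  match c with EPos l => FLit l | ENot l => FNot (FLit l) end.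

Inductive xbound : Type := XFin (r : R) | XPInf | XMInf.

Definition xle_b (w : xbound) (s : R) : bool :=
  match w with
  | XFin r => if Rle_dec r s then true else false
  | XPInf => false
  | XMInf => true
  end.

Definition xlt_b (w : xbound) (s : R) : bool :=
  match w with
  | XFin r => if Rlt_dec r s then true else false
  | XPInf => false
  | XMInf => true
  end.

Record wconstr : Type := mkW {
  lower : xbound;
  elems : list (elem * R);
  upper : xbound }.

Record wrule : Type := mkWRule { whead : wconstr; wbody : list wconstr }.

Definition wprogram := wrule -> Prop.

Definition weights_nonneg (C : wconstr) : Prop :=
  forall p, In p (elems C) -> 0 <= snd p.

(** All subsets I of {1..m}, each as (list of F_i for i in I, sum of w_i). *)
Fixpoint subsets (S : list (elem * R)) : list (list formula * R) :=
  match S with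
  | [] => [([], 0)]
  | (c, w) :: rest =>
      map (fun p => (elem_formula c :: fst p, w + snd p)) (subsets rest)
      ++ subsets rest
  end.

(** <F_1,...,F_m>:X with X given by a boolean test on the weight sum. *)
Definition sel (S : list (elem * R)) (test : R -> bool) : formula :=
  big_or (map (fun p => big_and (fst p))
              (filter (fun p => test (snd p)) (subsets S))).

Definition tr_le (w : xbound) (S : list (elem * R)) : formula := sel S (xle_b w).
Definition tr_lt (w : xbound) (S : list (elem * R)) : formula := sel S (xlt_b w).

Definition tr_constr (C : wconstr) : formula :=
  FAnd (tr_le (lower C) (elems C)) (FNot (tr_lt (upper C) (elems C))).

Definition pos_heads (r : wrule) : list lit :=
  flat_map (fun p => match fst p with EPos l => [l] | ENot _ => [] end)
           (elems (whead r)).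

Definition tr_body (r : wrule) : list formula := map tr_constr (wbody r).

Definition tr_rule (r : wrule) : rule :=
  mkRule (big_and (map (fun l => FOr (FLit l) (FNot (FLit l))) (pos_heads r)
                   ++ [tr_constr (whead r)]))
         (big_and (tr_body r)).

Definition tr_prog (O : wprogram) : program :=
  fun r' => exists r, O r /\ r' = tr_rule r.

Definition tr_rule_nd (r : wrule) : list rule :=
  map (fun l => mkRule (FLit l) (big_and (FNot (FNot (FLit l)) :: tr_body r)))
      (pos_heads r)
  ++ [mkRule FBot (big_and (FNot (tr_constr (whead r)) :: tr_body r))].

Definition tr_prog_nd (O : wprogram) : program :=
  fun r' => exists r, O r /\ In r' (tr_rule_nd r).

End Nested.

(* For X ⊆ Y, call (X, Y) a model of a rule when X satisfies its reduct
   w.r.t. Y.  Two programs having the same such models are strongly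
   equivalent, since adding a program only adds rules whose models are the
   same on both sides.  Rule by rule, the models of [Ω] and [Ω]^nd agree:
   under the reduct, the conjunct (l ; not l) of the head says that l passes
   from Y to X, which is what l ← not not l, Body says; and once the
   positive head literals pass from Y to X, the reduct of [C0] holds in X
   exactly when [C0] holds in Y, which is what ⊥ ← not [C0], Body says. *)
From Pilot Require Import Defs.
From Stdlib Require Import Reals List Classical ClassicalDescription.
Import ListNotations.

Section StrongEquivalence.
Variable atom : Type.
Implicit Types X Y : litset atom.

Lemma sat_big_and X (l : list (formula atom)) :
  sat X (big_and l) <-> (forall F, In F l -> sat X F).
Proof.
  induction l as [|F [|G l] IH].
  - simpl; tauto.
  - simpl; split; [intros H F' [<-|[]]; exact H | auto].
  - change (sat X F /\ sat X (big_and (G :: l)) <->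
            (forall F', F = F' \/ In F' (G :: l) -> sat X F')).
    rewrite IH; split; [intros [HF Hl] F' [<-|HF']; auto | auto].
Qed.

Lemma sat_big_or X (l : list (formula atom)) :
  sat X (big_or l) <-> (exists F, In F l /\ sat X F).
Proof.
  induction l as [|F [|G l] IH].
  - simpl; split; [tauto | intros [? [[] _]]].
  - simpl; split; [eauto | intros [F' [[<-|[]] H]]; exact H].
  - change (sat X F \/ sat X (big_or (G :: l)) <->
            (exists F', (F = F' \/ In F' (G :: l)) /\ sat X F')).
    rewrite IH; split.
    + intros [H|[F' [HF' H]]]; eauto.
    + intros [F' [[<-|HF'] H]]; eauto.
Qed.

Lemma reduct_big_and Y (l : list (formula atom)) :
  reduct Y (big_and l) = big_and (map (reduct Y) l).
Proof.
  induction l as [|F [|G l] IH]; try reflexivity.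
  change (FAnd (reduct Y F) (reduct Y (big_and (G :: l))) =
          FAnd (reduct Y F) (big_and (map (reduct Y) (G :: l)))).
  now rewrite IH.
Qed.

Lemma reduct_big_or Y (l : list (formula atom)) :
  reduct Y (big_or l) = big_or (map (reduct Y) l).
Proof.
  induction l as [|F [|G l] IH]; try reflexivity.
  change (FOr (reduct Y F) (reduct Y (big_or (G :: l))) =
          FOr (reduct Y F) (big_or (map (reduct Y) (G :: l)))).
  now rewrite IH.
Qed.

Lemma sat_reduct_big_and X Y (l : list (formula atom)) :
  sat X (reduct Y (big_and l)) <-> (forall F, In F l -> sat X (reduct Y F)).
Proof.
  rewrite reduct_big_and, sat_big_and; split.
  - intros H F HF; apply H, in_map; exact HF.
  - intros H F' HF'; apply in_map_iff in HF' as [F [<- HF]]; auto.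
Qed.

Lemma sat_reduct_big_or X Y (l : list (formula atom)) :
  sat X (reduct Y (big_or l)) <-> (exists F, In F l /\ sat X (reduct Y F)).
Proof.
  rewrite reduct_big_or, sat_big_or; split.
  - intros [F' [HF' H]]; apply in_map_iff in HF' as [F [<- HF]]; eauto.
  - intros [F [HF H]]; exists (reduct Y F); split; [apply in_map|]; assumption.
Qed.

Lemma sat_reduct_not X Y (F : formula atom) :
  sat X (reduct Y (FNot F)) <-> ~ sat Y F.
Proof.
  simpl; destruct (excluded_middle_informative (sat Y F)); simpl; tauto.
Qed.

Lemma sat_reduct_notnot X Y (F : formula atom) :
  sat X (reduct Y (FNot (FNot F))) <-> sat Y F.
Proof. rewrite sat_reduct_not; simpl; tauto. Qed.

Lemma sat_reduct_excluded_middle X Y (l : lit atom) :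
  sat X (reduct Y (FOr (FLit l) (FNot (FLit l)))) <-> (Y l -> X l).
Proof.
  change (X l \/ sat X (reduct Y (FNot (FLit l))) <-> (Y l -> X l)).
  rewrite sat_reduct_not; simpl; tauto.
Qed.

Lemma sat_reduct_self Y (F : formula atom) : sat Y (reduct Y F) <-> sat Y F.
Proof.
  induction F; simpl; try tauto.
  destruct (excluded_middle_informative (sat Y F)); simpl; tauto.
Qed.

(* Reducts contain no [not], so their satisfaction is monotone. *)
Lemma sat_reduct_mono X X' Y (F : formula atom) :
  subset X X' -> sat X (reduct Y F) -> sat X' (reduct Y F).
Proof.
  intros HXX'; induction F; simpl; auto; try tauto.
  destruct (excluded_middle_informative (sat Y F)); simpl; tauto.
Qed.

Lemma in_subsets_elem_formula (S : list (elem atom * R)) p F :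
  In p (subsets S) -> In F (fst p) ->
  exists c, In c (map fst S) /\ F = elem_formula c.
Proof.
  revert p; induction S as [|[c w] S IH]; intros p; simpl.
  - intros [<-|[]] [].
  - intros Hp HF; apply in_app_or in Hp as [Hp|Hp].
    + apply in_map_iff in Hp as [q [<- Hq]]; destruct HF as [<-|HF].
      * exists c; auto.
      * destruct (IH q Hq HF) as [c' [Hc' ->]]; eauto.
    + destruct (IH p Hp HF) as [c' [Hc' ->]]; eauto.
Qed.

(* The disjunct of [sel S test] true in Y stays true in X under the reduct:
   its negative elements are evaluated in Y anyway. *)
Lemma sat_reduct_sel X Y (S : list (elem atom * R)) (test : R -> bool) :
  (forall l, In (EPos l) (map fst S) -> Y l -> X l) ->
  sat Y (sel S test) -> sat X (reduct Y (sel S test)).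
Proof.
  intros Hpos HY; unfold sel in *.
  apply sat_big_or in HY as [F [HF HYF]]; apply sat_reduct_big_or.
  exists F; split; [exact HF|].
  apply in_map_iff in HF as [p [<- Hp]]; apply filter_In in Hp as [Hp _].
  rewrite sat_big_and in HYF; apply sat_reduct_big_and; intros G HG.
  destruct (in_subsets_elem_formula S p G Hp HG) as [[l|l] [Hc ->]];
    specialize (HYF _ HG); simpl in HYF.
  - now apply Hpos.
  - now apply sat_reduct_not.
Qed.

Lemma sat_reduct_tr_constr X Y (C : wconstr atom) :
  subset X Y -> (forall l, In (EPos l) (map fst (elems C)) -> Y l -> X l) ->
  (sat X (reduct Y (tr_constr C)) <-> sat Y (tr_constr C)).
Proof.
  intros HXY Hpos; split.
  - intros H; apply sat_reduct_self, (sat_reduct_mono _ _ _ _ HXY H).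
  - intros [Hlow Hup]; split.
    + apply sat_reduct_sel; assumption.
    + apply sat_reduct_not; exact Hup.
Qed.

Definition sat_rule_reduct X Y (r : rule atom) : Prop :=
  sat X (reduct Y (Defs.body r)) -> sat X (reduct Y (Defs.head r)).

Lemma sat_rule_reduct_nd_head X Y (l : lit atom) (B : list (formula atom)) :
  sat_rule_reduct X Y (mkRule (FLit l) (big_and (FNot (FNot (FLit l)) :: B))) <->
  ((forall F, In F B -> sat X (reduct Y F)) -> Y l -> X l).
Proof.
  unfold sat_rule_reduct; cbn [Defs.body Defs.head].
  rewrite sat_reduct_big_and; split.
  - intros H HB Yl; apply H; intros F [<-|HF]; [now apply sat_reduct_notnot | auto].
  - intros H HB; apply H; [intros F HF; apply HB; now right|].
    apply (sat_reduct_notnot X Y (FLit l)), HB; now left.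
Qed.

Lemma sat_rule_reduct_nd_constr X Y (C : formula atom) (B : list (formula atom)) :
  sat_rule_reduct X Y (mkRule (FBot atom) (big_and (FNot C :: B))) <->
  ((forall F, In F B -> sat X (reduct Y F)) -> sat Y C).
Proof.
  unfold sat_rule_reduct; cbn [Defs.body Defs.head reduct sat].
  rewrite sat_reduct_big_and; split.
  - intros H HB; apply NNPP; intros HC; apply H.
    intros F [<-|HF]; [now apply sat_reduct_not | auto].
  - intros H HB; apply (sat_reduct_not X Y C); [apply HB; now left|].
    apply H; intros F HF; apply HB; now right.
Qed.

Lemma pos_heads_in (r : wrule atom) (l : lit atom) :
  In (EPos l) (map fst (elems (whead r))) -> In l (pos_heads r).
Proof.
  intros H; apply in_map_iff in H as [p [Hp Hin]].
  apply in_flat_map; exists p; rewrite Hp; simpl; auto.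
Qed.

Lemma in_excluded_middles_app (ls : list (lit atom)) (G F : formula atom) :
  In F (map (fun l => FOr (FLit l) (FNot (FLit l))) ls ++ [G]) <->
  (exists l, In l ls /\ F = FOr (FLit l) (FNot (FLit l))) \/ F = G.
Proof.
  rewrite in_app_iff; simpl; split.
  - intros [HF|[<-|[]]]; [|now right].
    apply in_map_iff in HF as [l [<- Hl]]; left; exists l; split; auto.
  - intros [[l [Hl ->]]| ->]; [left | right; now left].
    apply in_map_iff; exists l; split; auto.
Qed.

Lemma sat_rule_reduct_tr_rule X Y (r : wrule atom) :
  subset X Y ->
  (sat_rule_reduct X Y (tr_rule r) <->
   forall r', In r' (tr_rule_nd r) -> sat_rule_reduct X Y r').
Proof.
  intros HXY; unfold sat_rule_reduct at 1, tr_rule; cbn [Defs.body Defs.head].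
  rewrite 2!sat_reduct_big_and.
  set (B := tr_body r); set (C := whead r).
  split.
  - intros H r' Hr'; apply in_app_or in Hr' as [Hr'|[<-|[]]].
    + apply in_map_iff in Hr' as [l [<- Hl]]; apply sat_rule_reduct_nd_head.
      intros HB; apply sat_reduct_excluded_middle, H; [exact HB|].
      apply in_excluded_middles_app; eauto.
    + apply sat_rule_reduct_nd_constr; intros HB.
      apply sat_reduct_self, (sat_reduct_mono _ _ _ _ HXY), H; [exact HB|].
      apply in_excluded_middles_app; auto.
  - intros H HB F HF.
    assert (Hpos : forall l, In l (pos_heads r) -> Y l -> X l).
    { intros l Hl; apply (sat_rule_reduct_nd_head X Y l B); [|exact HB].
      apply H, in_or_app; left; apply in_map_iff; eauto. }
    apply in_excluded_middles_app in HF as [[l [Hl ->]]| ->].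
    + apply sat_reduct_excluded_middle; auto.
    + apply sat_reduct_tr_constr; [exact HXY | intros l Hl; apply Hpos, pos_heads_in, Hl|].
      apply (sat_rule_reduct_nd_constr X Y (tr_constr C) B); [|exact HB].
      apply H, in_or_app; right; now left.
Qed.

Lemma satisfies_reduct_prog X Y (P : program atom) :
  satisfies X (reduct_prog Y P) <-> forall r, P r -> sat_rule_reduct X Y r.
Proof.
  unfold satisfies, reduct_prog, sat_rule_reduct; split.
  - intros H r Pr; apply (H (reduct_rule Y r)); eauto.
  - intros H r' [r [Pr ->]]; apply H; exact Pr.
Qed.

Lemma satisfies_reduct_union X Y (P Q : program atom) :
  satisfies X (reduct_prog Y (union P Q)) <->
  satisfies X (reduct_prog Y P) /\ satisfies X (reduct_prog Y Q).
Proof.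
  rewrite !satisfies_reduct_prog; unfold union; split.
  - intros H; split; intros r Hr; apply H; auto.
  - intros [HP HQ] r [Hr|Hr]; auto.
Qed.

Lemma strongly_equivalent_of_reduct_models (P Q : program atom) :
  (forall X Y, subset X Y ->
     satisfies X (reduct_prog Y P) <-> satisfies X (reduct_prog Y Q)) ->
  strongly_equivalent P Q.
Proof.
  intros HPQ R Z; unfold answer_set, minimal_model.
  rewrite !satisfies_reduct_union, (HPQ Z Z (fun l H => H)).
  split; intros [Hcons [Hsat Hmin]]; repeat split; try tauto;
    intros Z' Hcons' Hsat' HZ'; apply Hmin; auto;
    rewrite satisfies_reduct_union in *; [rewrite HPQ | rewrite <- HPQ]; tauto.
Qed.

Lemma satisfies_reduct_tr_prog X Y (O : wprogram atom) : subset X Y ->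
  (satisfies X (reduct_prog Y (tr_prog_nd O)) <->
   satisfies X (reduct_prog Y (tr_prog O))).
Proof.
  intros HXY; rewrite !satisfies_reduct_prog; split.
  - intros H r' [r [Or ->]]; apply sat_rule_reduct_tr_rule; [exact HXY|].
    intros r'' Hr''; apply H; exists r; auto.
  - intros H r' [r [Or Hr']]; revert r' Hr'.
    apply sat_rule_reduct_tr_rule; [exact HXY|].
    apply H; exists r; auto.
Qed.

End StrongEquivalence.

Theorem proposition2 (atom : Type) (O : wprogram atom) :
  (forall r, O r -> weights_nonneg (whead r) /\
                    forall C, In C (wbody r) -> weights_nonneg C) ->
  strongly_equivalent (tr_prog_nd O) (tr_prog O).
Proof.
  intros _.
  apply strongly_equivalent_of_reduct_models; intros X Y HXY.
  now apply satisfies_reduct_tr_prog.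
Qed.
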